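(* (Soundness.) For every finite multiset $\Gamma$ of formulae of intuitionistic linear logic and every formula $\varphi$: if $\Gamma \vdash \varphi$ is derivable in the natural deduction system $\mathrm{N_{ILL}}$, then the sequent $(\Gamma:\varphi)$ is valid, i.e. $\Gamma \Vdash^{\varnothing}_{\mathcal{B}} \varphi$ for every base $\mathcal{B}$.
   Context: Fix a set $\mathbb{A}$ of propositional atoms. ILL formulae: $\phi ::= p\in\mathbb{A} \mid \top \mid 0 \mid 1 \mid \phi\multimap\phi \mid \phi\otimes\phi \mid \phi\,\&\,\phi \mid \phi\oplus\phi \mid\ !\phi$. All multisets are finite; ''$\Gamma,\Delta$'' denotes multiset union. Natural deduction $\mathrm{N_{ILL}}$: $\Gamma\vdash\varphi$ is defined inductively by: (Ax) $\varphi\vdash\varphi$; ($\multimap$I) from $\Gamma,\phi\vdash\psi$ infer $\Gamma\vdash\phi\multimap\psi$; ($\multimap$E) from $\Gamma\vdash\phi\multimap\psi$ and $\Delta\vdash\phi$ infer $\Gamma,\Delta\vdash\psi$; ($\otimes$I) from $\Gamma\vdash\phi$, $\Delta\vdash\psi$ infer $\Gamma,\Delta\vdash\phi\otimes\psi$; ($\otimes$E) from $\Gamma\vdash\phi\otimes\psi$ and $\Delta,\phi,\psi\vdash\chi$ infer $\Gamma,\Delta\vdash\chi$; ($1$I) $\vdash 1$; ($1$E) from $\Gamma\vdash 1$, $\Delta\vdash\phi$ infer $\Gamma,\Delta\vdash\phi$; ($\&$I) from $\Gamma\vdash\phi$, $\Gamma\vdash\psi$ infer $\Gamma\vdash\phi\&\psi$;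 ($\&$E) from $\Gamma\vdash\phi\&\psi$ infer $\Gamma\vdash\phi$ and infer $\Gamma\vdash\psi$; ($\oplus$I) from $\Gamma\vdash\phi$ (or $\Gamma\vdash\psi$) infer $\Gamma\vdash\phi\oplus\psi$; ($\oplus$E) from $\Gamma\vdash\phi\oplus\psi$, $\Delta,\phi\vdash\chi$, $\Delta,\psi\vdash\chi$ infer $\Gamma,\Delta\vdash\chi$; ($\top$I) for $n\ge0$, from $\Gamma_i\vdash\phi_i$ ($i=1..n$) infer $\Gamma_1,\dots,\Gamma_n\vdash\top$; ($0$E) for $n\ge 0$, from $\Gamma_i\vdash\phi_i$ ($i=1..n$) and $\Delta\vdash 0$ infer $\Gamma_1,\dots,\Gamma_n,\Delta\vdash\chi$; (Prom$_n$) for $n\ge0$, from $\Gamma_i\vdash\,!\psi_i$ ($i=1..n$) and $!\psi_1,\dots,!\psi_n\vdash\phi$ infer $\Gamma_1,\dots,\Gamma_n\vdash\,!\phi$; (Der) from $\Gamma\vdash\,!\phi$, $\Delta,\phi\vdash\psi$ infer $\Gamma,\Delta\vdash\psi$; (Wk) from $\Gamma\vdash\,!\phi$, $\Delta\vdash\psi$ infer $\Gamma,\Delta\vdash\psi$; (Ctr) from $\Gamma\vdash\,!\phi$, $\Delta,!\phi,!\phi\vdash\psi$ infer $\Gamma,\Delta\vdash\psi$. Atomic rules and bases: an atomic sequent is $P\Rightarrow p$ with $P$ a multiset of atoms, $p$ an atom. An atomic box is a multiset of atomic sequents. An atomic rule is a triple $\langle\mathbf{A},\mathbf{S},p\rangle$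 with $\mathbf{A}$ a multiset of atomic boxes, $\mathbf{S}$ an atomic box, $p$ an atom. A base is a set of atomic rules. An atom $p$ is persistent in $\mathcal{B}$ if some $\langle\varnothing,\mathbf{S},p\rangle\in\mathcal{B}$ has $\mathbf{S}\neq\varnothing$. Derivability $\vdash_{\mathcal{B}}$ between atomic multisets and atoms is defined inductively: (Ref) $p\vdash_{\mathcal{B}}p$; (App) if $\langle\mathbf{A},\mathbf{S},p\rangle\in\mathcal{B}$ with $\mathbf{A}=\{\mathbf{T}_1,\dots,\mathbf{T}_m\}$, and there are atomic multisets $C_1,\dots,C_n$ ($n\ge m$) and a multiset $D=\{d_{m+1},\dots,d_n\}$ of atoms persistent in $\mathcal{B}$ such that $C_i,Q\vdash_{\mathcal{B}}q$ for every $i\le m$ and every $Q\Rightarrow q\in\mathbf{T}_i$, $C_j\vdash_{\mathcal{B}}d_j$ for every $m<j\le n$, and $D,U\vdash_{\mathcal{B}}v$ for every $U\Rightarrow v\in\mathbf{S}$, then $C_1,\dots,C_n\vdash_{\mathcal{B}}p$. Support $\Vdash^L_{\mathcal{B}}$ (base $\mathcal{B}$, atomic multiset $L$), defined by induction on formulae: $\Vdash^L_{\mathcal{B}}p$ iff $L\vdash_{\mathcal{B}}p$; $\Vdash^L_{\mathcal{B}}\varphi\multimap\psi$ iff $\varphi\Vdash^L_{\mathcal{B}}\psi$; $\Vdash^L_{\mathcal{B}}\varphi\otimes\psi$ iff for all $\mathcal{C}\supseteq\mathcal{B}$, atomic multisets $K$, atoms $p$: if $\varphi,\psi\Vdash^K_{\mathcal{C}}p$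 then $\Vdash^{L,K}_{\mathcal{C}}p$; $\Vdash^L_{\mathcal{B}}1$ iff for all $\mathcal{C}\supseteq\mathcal{B}$, $K$, $p$: if $\Vdash^K_{\mathcal{C}}p$ then $\Vdash^{L,K}_{\mathcal{C}}p$; $\Vdash^L_{\mathcal{B}}\varphi\&\psi$ iff $\Vdash^L_{\mathcal{B}}\varphi$ and $\Vdash^L_{\mathcal{B}}\psi$; $\Vdash^L_{\mathcal{B}}\varphi\oplus\psi$ iff for all $\mathcal{C}\supseteq\mathcal{B}$, $K$, $p$: if $\varphi\Vdash^K_{\mathcal{C}}p$ and $\psi\Vdash^K_{\mathcal{C}}p$ then $\Vdash^{L,K}_{\mathcal{C}}p$; $\Vdash^L_{\mathcal{B}}0$ iff $\Vdash^{L,K}_{\mathcal{B}}p$ for all atoms $p$ and atomic multisets $K$; $\Vdash^L_{\mathcal{B}}\top$ always; $\Vdash^L_{\mathcal{B}}!\varphi$ iff for all $\mathcal{C}\supseteq\mathcal{B}$, $K$, $p$: if (for all $\mathcal{D}\supseteq\mathcal{C}$, $\Vdash^{\varnothing}_{\mathcal{D}}\varphi$ implies $\Vdash^K_{\mathcal{D}}p$) then $\Vdash^{L,K}_{\mathcal{C}}p$. For nonempty multisets: $\Vdash^L_{\mathcal{B}}\Gamma,\Delta$ iff $L=K,M$ for some $K,M$ with $\Vdash^K_{\mathcal{B}}\Gamma$ and $\Vdash^M_{\mathcal{B}}\Delta$. For a nonempty antecedent written as $!\Delta,\Theta$, where $!\Delta$ collects the formulae whose top-level connective is $!$ (with $\Delta$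 the formulae under those $!$) and $\Theta$ contains none: $!\Delta,\Theta\Vdash^L_{\mathcal{B}}\varphi$ iff for all $\mathcal{C}\supseteq\mathcal{B}$ and atomic $K$, if $\Vdash^{\varnothing}_{\mathcal{C}}\delta$ for every $\delta\in\Delta$ and $\Vdash^K_{\mathcal{C}}\Theta$ then $\Vdash^{L,K}_{\mathcal{C}}\varphi$ (when $\Theta$ is empty, $K$ is empty). An empty antecedent: $\varnothing\Vdash^L_{\mathcal{B}}\varphi$ means $\Vdash^L_{\mathcal{B}}\varphi$. A sequent $(\Gamma:\varphi)$ is valid, written $\Gamma\Vdash\varphi$, iff $\Gamma\Vdash^{\varnothing}_{\mathcal{B}}\varphi$ for all bases $\mathcal{B}$. *)

(* Multisets are represented by lists, taken up to permutation. *)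
From Stdlib Require Import List Permutation.
Import ListNotations.
Set Implicit Arguments.

Section ILL.
Variable A : Type.

Inductive formula : Type :=
| Atom : A -> formula
| Top : formula
| Zero : formula
| One : formula
| Lolli : formula -> formula -> formula
| Tensor : formula -> formula -> formula
| With : formula -> formula -> formula
| Plus : formula -> formula -> formula
| Bang : formula -> formula.

Inductive nd : list formula -> formula -> Prop :=
| nd_perm G G' f : Permutation G G' -> nd G f -> nd G' f
| nd_ax f : nd [f] f
| nd_lolliI G f g : nd (f :: G) g -> nd G (Lolli f g)
| nd_lolliE G D f g : nd G (Lolli f g) -> nd D f -> nd (G ++ D) g
| nd_tensorI G D f g : nd G f -> nd D g -> nd (G ++ D) (Tensor f g)
| nd_tensorE G D f g h : nd G (Tensor f g) -> nd (f :: g :: D) h -> nd (G ++ D) h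
| nd_oneI : nd [] One
| nd_oneE G D f : nd G One -> nd D f -> nd (G ++ D) f
| nd_withI G f g : nd G f -> nd G g -> nd G (With f g)
| nd_withE1 G f g : nd G (With f g) -> nd G f
| nd_withE2 G f g : nd G (With f g) -> nd G g
| nd_plusI1 G f g : nd G f -> nd G (Plus f g)
| nd_plusI2 G f g : nd G g -> nd G (Plus f g)
| nd_plusE G D f g h : nd G (Plus f g) -> nd (f :: D) h -> nd (g :: D) h -> nd (G ++ D) h
| nd_topI (ps : list (list formula * formula)) :
    Forall (fun p => nd (fst p) (snd p)) ps -> nd (concat (map fst ps)) Top
| nd_zeroE (ps : list (list formula * formula)) D h :
    Forall (fun p => nd (fst p) (snd p)) ps -> nd D Zero ->
    nd (concat (map fst ps) ++ D) h
| nd_prom (ps : list (list formula * formula)) f :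
    Forall (fun p => nd (fst p) (Bang (snd p))) ps ->
    nd (map (fun p => Bang (snd p)) ps) f ->
    nd (concat (map fst ps)) (Bang f)
| nd_der G D f g : nd G (Bang f) -> nd (f :: D) g -> nd (G ++ D) g
| nd_wk G D f g : nd G (Bang f) -> nd D g -> nd (G ++ D) g
| nd_ctr G D f g : nd G (Bang f) -> nd (Bang f :: Bang f :: D) g -> nd (G ++ D) g.

Definition asequent : Type := (list A * A)%type.
Definition abox : Type := list asequent.
Definition arule : Type := (list abox * abox * A)%type.
Definition base : Type := arule -> Prop.

Definition extends (B C : base) : Prop := forall r, B r -> C r.

Definition persistent (B : base) (p : A) : Prop :=
  exists S, B ([], S, p) /\ S <> [].

Inductive deriv (B : base) : list A -> A -> Prop :=
| deriv_ref L p : Permutation L [p] -> deriv B L p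
| deriv_app (As : list abox) (S : abox) (p : A)
    (CA CD : list (list A)) (ds : list A) (L : list A) :
    B (As, S, p) ->
    Forall2 (fun T C => forall Q q, In (Q, q) T -> deriv B (C ++ Q) q) As CA ->
    Forall2 (fun C d => deriv B C d) CD ds ->
    Forall (persistent B) ds ->
    (forall U v, In (U, v) S -> deriv B (ds ++ U) v) ->
    Permutation L (concat CA ++ concat CD) ->
    deriv B L p.

Fixpoint supp (f : formula) (B : base) (L : list A) {struct f} : Prop :=
  match f with
  | Atom p => deriv B L p
  | Lolli f1 f2 =>
      (* f1 ||-^L_B f2 *)
      forall C, extends B C -> forall K,
        match f1 with
        | Bang d => K = [] /\ supp d C []
        | _ => supp f1 C K
        end -> supp f2 C (L ++ K)
  | Tensor f1 f2 =>
      forall C K p, extends B C ->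
        (* f1, f2 ||-^K_C p *)
        (forall D, extends C D -> forall K',
           match f1, f2 with
           | Bang d1, Bang d2 => K' = [] /\ supp d1 D [] /\ supp d2 D []
           | Bang d1, _ => supp d1 D [] /\ supp f2 D K'
           | _, Bang d2 => supp f1 D K' /\ supp d2 D []
           | _, _ => exists K1 K2, Permutation K' (K1 ++ K2) /\
                                   supp f1 D K1 /\ supp f2 D K2
           end -> deriv D (K ++ K') p) ->
        deriv C (L ++ K) p
  | One => forall C K p, extends B C -> deriv C K p -> deriv C (L ++ K) p
  | With f1 f2 => supp f1 B L /\ supp f2 B L
  | Plus f1 f2 =>
      forall C K p, extends B C ->
        (* f1 ||-^K_C p *)
        (forall D, extends C D -> forall K',
           match f1 with
           | Bang d => K' = [] /\ supp d D []
           | _ => supp f1 D K'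
           end -> deriv D (K ++ K') p) ->
        (* f2 ||-^K_C p *)
        (forall D, extends C D -> forall K',
           match f2 with
           | Bang d => K' = [] /\ supp d D []
           | _ => supp f2 D K'
           end -> deriv D (K ++ K') p) ->
        deriv C (L ++ K) p
  | Zero => forall p K, deriv B (L ++ K) p
  | Top => True
  | Bang f1 =>
      forall C K p, extends B C ->
        (forall D, extends C D -> supp f1 D [] -> deriv D K p) ->
        deriv C (L ++ K) p
  end.

Definition is_bang (f : formula) : bool :=
  match f with Bang _ => true | _ => false end.

Fixpoint supp_ms (Th : list formula) (B : base) (K : list A) : Prop :=
  match Th with
  | [] => K = []
  | [t] => supp t B K
  | t :: Th' => exists K1 K2, Permutation K (K1 ++ K2) /\
                              supp t B K1 /\ supp_ms Th' B K2
  end.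

Definition seq_supp (G : list formula) (B : base) (L : list A) (f : formula) : Prop :=
  match G with
  | [] => supp f B L
  | _ => forall C, extends B C -> forall K,
           (forall d, In (Bang d) G -> supp d C []) ->
           supp_ms (filter (fun g => negb (is_bang g)) G) C K ->
           supp f C (L ++ K)
  end.

Definition valid (G : list formula) (f : formula) : Prop :=
  forall B : base, seq_supp G B [] f.

End ILL.

From Stdlib Require Import List Permutation.
Import ListNotations.
Set Implicit Arguments.

(* Soundness is proved for a base-local reading of sequents, [entails G f]: in every
   base, every atom multiset supporting the hypotheses G supports f, a hypothesis !d
   being supported by the empty multiset exactly when d is supported outright.
   The support clauses of ⊗, ⊕, 1, 0 and ! share one shape: L "eliminates" to a
   condition P when L, M supports every atom p that M, K' supports whenever P holds
   of K' in an extension.  By induction on formulas, such an elimination transfers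
   from atomic conclusions to arbitrary ones.  This is the semantic content of the
   elimination rules and of cut, and with it every rule of N_ILL preserves [entails]. *)

Section Soundness.
Variable A : Type.
Notation fm := (formula A).
Notation bs := (base A).

Lemma extends_refl (B : bs) : extends B B.
Proof. intros r H; exact H. Qed.

Lemma extends_trans (B C D : bs) : extends B C -> extends C D -> extends B D.
Proof. intros HBC HCD r H; auto. Qed.

Lemma deriv_perm (B : bs) L L' p : deriv B L p -> Permutation L L' -> deriv B L' p.
Proof.
  intros d HP; destruct d.
  - apply deriv_ref; now rewrite <- HP.
  - eapply deriv_app; eauto. now rewrite <- HP.
Qed.

Lemma deriv_mono (B C : bs) : extends B C -> forall L p, deriv B L p -> deriv C L p.
Proof.
  intros HBC. fix IH 3. intros L p d.
  destruct d as [L p Hr | As S p CA CD ds L HB HA HD Hds HS HL].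
  - now apply deriv_ref.
  - apply deriv_app with As S CA CD ds; [exact (HBC _ HB) | | | | | exact HL].
    + clear - IH HA. induction HA as [|T C0 As CA HT HA IHA]; constructor.
      * intros Q q HQ. exact (IH _ _ (HT _ _ HQ)).
      * exact IHA.
    + clear - IH HD. induction HD as [|C0 d CD ds Hd HD IHD]; constructor.
      * exact (IH _ _ Hd).
      * exact IHD.
    + revert Hds. apply Forall_impl. intros d (S' & HS' & Hne).
      exists S'. split; [exact (HBC _ HS') | exact Hne].
    + intros U v HU. exact (IH _ _ (HS _ _ HU)).
Qed.

Lemma supp_perm {f : fm} {B : bs} {L L'} : supp f B L -> Permutation L L' -> supp f B L'.
Proof.
  revert B L L'; induction f; intros B L L' H HP; cbn in *.
  - exact (deriv_perm H HP).
  - exact I.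
  - intros p K. apply (deriv_perm (H p K)). now apply Permutation_app_tail.
  - intros C K p HC Hd. apply (deriv_perm (H C K p HC Hd)). now apply Permutation_app_tail.
  - intros C HC K HK. apply (IHf2 _ _ _ (H C HC K HK)). now apply Permutation_app_tail.
  - intros C K p HC Hk. apply (deriv_perm (H C K p HC Hk)). now apply Permutation_app_tail.
  - destruct H; split; eauto.
  - intros C K p HC Hk1 Hk2. apply (deriv_perm (H C K p HC Hk1 Hk2)).
    now apply Permutation_app_tail.
  - intros C K p HC Hk. apply (deriv_perm (H C K p HC Hk)). now apply Permutation_app_tail.
Qed.

Lemma supp_mono {f : fm} {B C : bs} {L} : extends B C -> supp f B L -> supp f C L.
Proof.
  revert B C L; induction f; intros B C L HBC H; cbn in *.
  - exact (deriv_mono HBC H).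
  - exact I.
  - intros p K. exact (deriv_mono HBC (H p K)).
  - intros D K p HCD. apply H. exact (extends_trans HBC HCD).
  - intros D HCD. apply H. exact (extends_trans HBC HCD).
  - intros D K p HCD. apply H. exact (extends_trans HBC HCD).
  - destruct H; split; eauto.
  - intros D K p HCD. apply H. exact (extends_trans HBC HCD).
  - intros D K p HCD. apply H. exact (extends_trans HBC HCD).
Qed.

(* How a formula is supported as a hypothesis, as in the clauses for ⊸, ⊗, ⊕ and in
   [seq_supp]: a hypothesis [!d] consumes no atoms and needs [d] supported outright. *)
Definition supp_ante (f : fm) (B : bs) (K : list A) : Prop :=
  match f with
  | Bang d => K = [] /\ supp d B []
  | _ => supp f B K
  end.

Lemma supp_ante_mono {f : fm} {B C : bs} {K} : extends B C -> supp_ante f B K -> supp_ante f C K.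
Proof.
  intros HBC H. destruct f; cbn [supp_ante] in *; try exact (supp_mono HBC H).
  destruct H as [-> H]. split; [reflexivity | exact (supp_mono HBC H)].
Qed.

Fixpoint supp_ctx (G : list fm) (B : bs) (K : list A) : Prop :=
  match G with
  | [] => K = []
  | g :: G' => exists K1 K2, Permutation K (K1 ++ K2) /\ supp_ante g B K1 /\ supp_ctx G' B K2
  end.

Lemma supp_ctx_mono {G : list fm} {B C : bs} {K} : extends B C -> supp_ctx G B K -> supp_ctx G C K.
Proof.
  intros HBC. revert K. induction G as [|g G IH]; intros K H; cbn in *; auto.
  destruct H as (K1 & K2 & HP & Hg & HG).
  exists K1, K2. split; [exact HP | split; [exact (supp_ante_mono HBC Hg) | exact (IH _ HG)]].
Qed.

Lemma supp_ctx_pair (f g : fm) (B : bs) K :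
  supp_ctx [f; g] B K <->
  exists K1 K2, Permutation K (K1 ++ K2) /\ supp_ante f B K1 /\ supp_ante g B K2.
Proof.
  cbn. split.
  - intros (K1 & K2 & HP & Hf & K3 & K4 & HP' & Hg & ->).
    rewrite app_nil_r in HP'. exists K1, K3. rewrite HP, HP'. auto.
  - intros (K1 & K2 & HP & Hf & Hg). exists K1, K2. repeat split; auto.
    exists K2, []. rewrite app_nil_r. auto.
Qed.

Lemma supp_ctx_app_inv {G G' : list fm} {B : bs} {K} :
  supp_ctx (G ++ G') B K ->
  exists K1 K2, Permutation K (K1 ++ K2) /\ supp_ctx G B K1 /\ supp_ctx G' B K2.
Proof.
  revert K. induction G as [|g G IH]; intros K H; cbn in *.
  - exists [], K. auto.
  - destruct H as (K1 & K2 & HP & Hg & H).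
    destruct (IH _ H) as (K3 & K4 & HP' & HG & HG').
    exists (K1 ++ K3), K4. split; [| split; [exists K1, K3; auto | exact HG']].
    rewrite <- app_assoc, HP, HP'. reflexivity.
Qed.

Lemma supp_ctx_app {G G' : list fm} {B : bs} {K1 K2} :
  supp_ctx G B K1 -> supp_ctx G' B K2 -> supp_ctx (G ++ G') B (K1 ++ K2).
Proof.
  revert K1. induction G as [|g G IH]; intros K1 H H'; cbn in *.
  - now subst.
  - destruct H as (K3 & K4 & HP & Hg & H).
    exists K3, (K4 ++ K2). split; [| split; [exact Hg | exact (IH _ H H')]].
    rewrite HP, app_assoc. reflexivity.
Qed.

Lemma supp_ctx_perm {G G' : list fm} {B : bs} {K} :
  Permutation G G' -> supp_ctx G B K -> supp_ctx G' B K.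
Proof.
  intros HG. revert K. induction HG as [| g G G' _ IH | g g' G | G G' G'' _ IH1 _ IH2];
    intros K H; cbn in *; auto.
  - destruct H as (K1 & K2 & HP & Hg & H). exists K1, K2. auto.
  - destruct H as (K1 & K2 & HP & Hg & K3 & K4 & HP' & Hg' & H).
    exists K3, (K1 ++ K4). split; [| split; [exact Hg' | exists K1, K4; auto]].
    rewrite HP, HP'. apply Permutation_app_swap_app.
Qed.

Lemma supp_ctx_map_bang {ps : list (list fm * fm)} {B : bs} :
  Forall (fun p => supp (snd p) B []) ps -> supp_ctx (map (fun p => Bang (snd p)) ps) B [].
Proof. induction 1; cbn; auto. exists [], []. auto. Qed.

Definition eliminates (P : bs -> list A -> Prop) (B : bs) (K : list A) : Prop :=
  forall C, extends B C -> forall M p,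
    (forall D, extends C D -> forall K', P D K' -> deriv D (M ++ K') p) ->
    deriv C (K ++ M) p.

Lemma eliminates_mono {P} {B C : bs} {K} : extends B C -> eliminates P B K -> eliminates P C K.
Proof. intros HBC H D HCD. exact (H D (extends_trans HBC HCD)). Qed.

Lemma perm_app_swap_r (L K M : list A) : Permutation ((L ++ K) ++ M) ((L ++ M) ++ K).
Proof. rewrite <- !app_assoc. apply Permutation_app_head, Permutation_app_comm. Qed.

Lemma eliminates_bind {P Q} {B : bs} {K} L :
  eliminates P B K ->
  (forall D, extends B D -> forall K', P D K' -> eliminates Q D (L ++ K')) ->
  eliminates Q B (K ++ L).
Proof.
  intros HP HQ C HBC M p Hk. rewrite <- app_assoc. apply (HP C HBC (L ++ M) p).
  intros D HCD K' HPD. apply (deriv_perm (L := (L ++ K') ++ M)); [| apply perm_app_swap_r].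
  apply (HQ D (extends_trans HBC HCD) K' HPD D (extends_refl D) M p).
  intros E HDE. apply Hk. exact (extends_trans HCD HDE).
Qed.

Lemma supp_lolli_iff (f g : fm) (B : bs) L :
  supp (Lolli f g) B L <->
  forall C, extends B C -> forall K, supp_ante f C K -> supp g C (L ++ K).
Proof. reflexivity. Qed.

Lemma supp_zero_iff (B : bs) L : supp (Zero A) B L <-> eliminates (fun _ _ => False) B L.
Proof.
  split.
  - intros H C HBC M p _. exact (deriv_mono HBC (H p M)).
  - intros H p M. apply (H B (extends_refl B)). intros _ _ _ [].
Qed.

Lemma supp_one_iff (B : bs) L : supp (One A) B L <-> eliminates (fun _ K => K = []) B L.
Proof.
  split.
  - intros H C HBC M p Hk. apply (H C M p HBC).
    rewrite <- (app_nil_r M). exact (Hk C (extends_refl C) [] eq_refl).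
  - intros H C M p HBC Hd. apply (H C HBC). intros D HCD K ->.
    rewrite app_nil_r. exact (deriv_mono HCD Hd).
Qed.

Lemma supp_bang_iff (f : fm) (B : bs) L : supp (Bang f) B L <-> eliminates (supp_ante (Bang f)) B L.
Proof.
  split.
  - intros H C HBC M p Hk. apply (H C M p HBC). intros D HCD Hf.
    rewrite <- (app_nil_r M). exact (Hk D HCD [] (conj eq_refl Hf)).
  - intros H C M p HBC Hk. apply (H C HBC). intros D HCD K [-> Hf].
    rewrite app_nil_r. exact (Hk D HCD Hf).
Qed.

Lemma supp_plus_iff (f g : fm) (B : bs) L :
  supp (Plus f g) B L <->
  eliminates (fun D K => supp_ante f D K \/ supp_ante g D K) B L.
Proof.
  change (supp (Plus f g) B L) with (forall C M p, extends B C ->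
    (forall D, extends C D -> forall K, supp_ante f D K -> deriv D (M ++ K) p) ->
    (forall D, extends C D -> forall K, supp_ante g D K -> deriv D (M ++ K) p) ->
    deriv C (L ++ M) p).
  split.
  - intros H C HBC M p Hk. apply (H C M p HBC); auto.
  - intros H C M p HBC Hf Hg. apply (H C HBC). intros D HCD K [HK | HK]; auto.
Qed.

(* Verbatim the hypothesis of the ⊗ clause of [supp]. *)
Definition supp_tensor_hyp (f g : fm) (D : bs) (K : list A) : Prop :=
  match f, g with
  | Bang d1, Bang d2 => K = [] /\ supp d1 D [] /\ supp d2 D []
  | Bang d1, _ => supp d1 D [] /\ supp g D K
  | _, Bang d2 => supp f D K /\ supp d2 D []
  | _, _ => exists K1 K2, Permutation K (K1 ++ K2) /\ supp f D K1 /\ supp g D K2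
  end.

Lemma supp_tensor_hyp_iff (f g : fm) (D : bs) K : supp_tensor_hyp f g D K <-> supp_ctx [f; g] D K.
Proof.
  rewrite supp_ctx_pair. unfold supp_tensor_hyp.
  destruct f, g; cbn [supp_ante]; split.
  all: first
    [ intros H; exact H
    | intros (-> & H1 & H2); exists [], []; auto
    | intros (H1 & H2); solve [exists [], K; auto | exists K, []; rewrite app_nil_r; auto]
    | intros (K1 & K2 & HP & [-> H1] & [-> H2]);
        split; [apply Permutation_nil; now symmetry | auto]
    | intros (K1 & K2 & HP & [-> H1] & H2);
        split; [exact H1 | exact (supp_perm H2 (Permutation_sym HP))]
    | intros (K1 & K2 & HP & H1 & [-> H2]); rewrite app_nil_r in HP;
        split; [exact (supp_perm H1 (Permutation_sym HP)) | exact H2] ].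
Qed.

Lemma supp_tensor_iff (f g : fm) (B : bs) L :
  supp (Tensor f g) B L <-> eliminates (supp_ctx [f; g]) B L.
Proof.
  change (supp (Tensor f g) B L) with (forall C M p, extends B C ->
    (forall D, extends C D -> forall K, supp_tensor_hyp f g D K -> deriv D (M ++ K) p) ->
    deriv C (L ++ M) p).
  split.
  - intros H C HBC M p Hk. apply (H C M p HBC). intros D HCD K HK.
    apply (Hk D HCD), supp_tensor_hyp_iff, HK.
  - intros H C M p HBC Hk. apply (H C HBC). intros D HCD K HK.
    apply (Hk D HCD), supp_tensor_hyp_iff, HK.
Qed.

Lemma supp_of_eliminates {P} {chi : fm} {B : bs} {K L} :
  eliminates P B K ->
  (forall D, extends B D -> forall K', P D K' -> supp chi D (L ++ K')) ->
  supp chi B (K ++ L).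
Proof.
  revert B K L. induction chi as [a | | | | chi1 _ chi2 IH2 | f g | chi1 IH1 chi2 IH2 | f g | f];
    intros B K L HE Hk.
  - exact (HE B (extends_refl B) L a Hk).
  - exact I.
  - apply supp_zero_iff, (eliminates_bind L HE).
    intros D HBD K' HP. apply supp_zero_iff, Hk; auto.
  - apply supp_one_iff, (eliminates_bind L HE).
    intros D HBD K' HP. apply supp_one_iff, Hk; auto.
  - apply supp_lolli_iff. intros C HBC M HM. rewrite <- app_assoc.
    apply (IH2 C K (L ++ M) (eliminates_mono HBC HE)). intros D HCD K' HP.
    apply (supp_perm (L := (L ++ K') ++ M)); [| apply perm_app_swap_r].
    apply (proj1 (supp_lolli_iff _ _ _ _) (Hk D (extends_trans HBC HCD) K' HP)).
    + exact (extends_refl D).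
    + exact (supp_ante_mono HCD HM).
  - apply supp_tensor_iff, (eliminates_bind L HE).
    intros D HBD K' HP. apply supp_tensor_iff, Hk; auto.
  - split; [apply (IH1 B K L HE) | apply (IH2 B K L HE)]; intros D HBD K' HP; apply Hk; auto.
  - apply supp_plus_iff, (eliminates_bind L HE).
    intros D HBD K' HP. apply supp_plus_iff, Hk; auto.
  - apply supp_bang_iff, (eliminates_bind L HE).
    intros D HBD K' HP. apply supp_bang_iff, Hk; auto.
Qed.

Lemma supp_eliminates {f : fm} {B : bs} {K} : supp f B K -> eliminates (supp_ante f) B K.
Proof.
  intros H. destruct f; try (apply supp_bang_iff, H).
  all: intros C HBC M p Hk; apply (deriv_perm (Hk C (extends_refl C) K (supp_mono HBC H))).
  all: apply Permutation_app_comm.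
Qed.

Lemma supp_cut {f chi : fm} {B : bs} {K L} :
  supp f B K ->
  (forall D, extends B D -> forall K', supp_ante f D K' -> supp chi D (L ++ K')) ->
  supp chi B (K ++ L).
Proof. intros H. exact (supp_of_eliminates (supp_eliminates H)). Qed.

Lemma supp_bang_intro {f : fm} {B : bs} : supp f B [] -> supp (Bang f) B [].
Proof.
  intros H. apply supp_bang_iff. intros C HBC M p Hk. cbn. rewrite <- (app_nil_r M).
  exact (Hk C (extends_refl C) [] (conj eq_refl (supp_mono HBC H))).
Qed.

Lemma supp_of_supp_ante {f : fm} {B : bs} {K} : supp_ante f B K -> supp f B K.
Proof.
  intros H. destruct f; try exact H.
  destruct H as [-> H]. exact (supp_bang_intro H).
Qed.

Lemma supp_lolli_elim {f g : fm} {B : bs} {K1 K2} :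
  supp (Lolli f g) B K1 -> supp f B K2 -> supp g B (K1 ++ K2).
Proof.
  intros Hfg Hf. apply (supp_perm (L := K2 ++ K1)); [| apply Permutation_app_comm].
  apply (supp_cut Hf). intros D HBD K' HK'.
  exact (proj1 (supp_lolli_iff _ _ _ _) Hfg D HBD K' HK').
Qed.

Lemma supp_tensor_intro {f g : fm} {B : bs} {K1 K2} :
  supp f B K1 -> supp g B K2 -> supp (Tensor f g) B (K1 ++ K2).
Proof.
  intros Hf Hg. apply supp_tensor_iff. intros C HBC M p Hk.
  rewrite <- app_assoc. apply (supp_cut (chi := Atom p) (supp_mono HBC Hf)).
  intros D HCD K' HK'. cbn. rewrite <- app_assoc.
  apply (supp_cut (chi := Atom p) (supp_mono (extends_trans HBC HCD) Hg)).
  intros E HDE K'' HK''. cbn. rewrite <- app_assoc.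
  apply (Hk E (extends_trans HCD HDE)), supp_ctx_pair.
  exists K', K''. split; [reflexivity | split; [exact (supp_ante_mono HDE HK') | exact HK'']].
Qed.

Lemma supp_plus_intro_l {f g : fm} {B : bs} {K} : supp f B K -> supp (Plus f g) B K.
Proof.
  intros Hf. apply supp_plus_iff. intros C HBC M p Hk.
  apply (supp_cut (chi := Atom p) (supp_mono HBC Hf)). intros D HCD K' HK'.
  apply Hk; auto.
Qed.

Lemma supp_plus_intro_r {f g : fm} {B : bs} {K} : supp g B K -> supp (Plus f g) B K.
Proof.
  intros Hg. apply supp_plus_iff. intros C HBC M p Hk.
  apply (supp_cut (chi := Atom p) (supp_mono HBC Hg)). intros D HCD K' HK'.
  apply Hk; auto.
Qed.

Definition entails (G : list fm) (f : fm) : Prop :=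
  forall B K, supp_ctx G B K -> supp f B K.

Lemma supp_of_entails_cons {f g : fm} {G : list fm} {B : bs} {K K'} :
  entails (f :: G) g -> supp f B K -> supp_ctx G B K' -> supp g B (K ++ K').
Proof.
  intros H Hf HG. apply (supp_cut Hf). intros D HBD K'' HK''. apply H.
  exists K'', K'. split; [apply Permutation_app_comm |].
  split; [exact HK'' | exact (supp_ctx_mono HBD HG)].
Qed.

Lemma supp_of_entails_bangs {ps : list (list fm * fm)} {chi : fm} {B : bs} {K L} :
  Forall (fun p => entails (fst p) (Bang (snd p))) ps ->
  supp_ctx (concat (map fst ps)) B K ->
  (forall D, extends B D -> Forall (fun p => supp (snd p) D []) ps -> supp chi D L) ->
  supp chi B (K ++ L).
Proof.
  intros Hps. revert B K.
  induction Hps as [|q ps Hq _ IH]; intros B K HK Hchi; cbn in HK.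
  - subst K. apply (Hchi B (extends_refl B)). constructor.
  - destruct (supp_ctx_app_inv HK) as (K1 & K2 & HP & H1 & H2).
    apply (supp_perm (L := K1 ++ K2 ++ L)); [| rewrite HP, app_assoc; reflexivity].
    apply (supp_cut (Hq B K1 H1)). intros D HBD K' [-> Hs]. rewrite app_nil_r.
    apply (IH D K2 (supp_ctx_mono HBD H2)). intros E HDE Hps.
    apply (Hchi E (extends_trans HBD HDE)). constructor; [exact (supp_mono HDE Hs) | exact Hps].
Qed.

Lemma entails_perm {G G' : list fm} {f : fm} : Permutation G G' -> entails G f -> entails G' f.
Proof. intros HG H B K HK. exact (H B K (supp_ctx_perm (Permutation_sym HG) HK)). Qed.

Lemma entails_app {G G' : list fm} {h : fm} :
  (forall B K1 K2, supp_ctx G B K1 -> supp_ctx G' B K2 -> supp h B (K1 ++ K2)) ->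
  entails (G ++ G') h.
Proof.
  intros H B K HK. destruct (supp_ctx_app_inv HK) as (K1 & K2 & HP & H1 & H2).
  exact (supp_perm (H B K1 K2 H1 H2) (Permutation_sym HP)).
Qed.

Lemma entails_app_of_eliminates {P : bs -> list A -> Prop} {G G' : list fm} {h : fm} :
  (forall B K, supp_ctx G B K -> eliminates P B K) ->
  (forall D K K', P D K -> supp_ctx G' D K' -> supp h D (K ++ K')) ->
  entails (G ++ G') h.
Proof.
  intros HG HG'. apply entails_app. intros B K1 K2 H1 H2.
  apply (supp_of_eliminates (HG B K1 H1)). intros D HBD K' HP.
  apply (supp_perm (L := K' ++ K2)); [| apply Permutation_app_comm].
  exact (HG' D K' K2 HP (supp_ctx_mono HBD H2)).
Qed.

Lemma entails_ax {f : fm} : entails [f] f.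
Proof.
  intros B K (K1 & K2 & HP & Hf & ->). rewrite app_nil_r in HP.
  exact (supp_perm (supp_of_supp_ante Hf) (Permutation_sym HP)).
Qed.

Lemma entails_lolliI {G : list fm} {f g : fm} : entails (f :: G) g -> entails G (Lolli f g).
Proof.
  intros H B K HK. apply supp_lolli_iff. intros C HBC M HM. apply H.
  exists M, K. split; [apply Permutation_app_comm |].
  split; [exact HM | exact (supp_ctx_mono HBC HK)].
Qed.

Lemma entails_lolliE {G G' : list fm} {f g : fm} :
  entails G (Lolli f g) -> entails G' f -> entails (G ++ G') g.
Proof.
  intros H H'. apply entails_app. intros B K1 K2 H1 H2.
  exact (supp_lolli_elim (H B K1 H1) (H' B K2 H2)).
Qed.

Lemma entails_tensorI {G G' : list fm} {f g : fm} :
  entails G f -> entails G' g -> entails (G ++ G') (Tensor f g).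
Proof.
  intros H H'. apply entails_app. intros B K1 K2 H1 H2.
  exact (supp_tensor_intro (H B K1 H1) (H' B K2 H2)).
Qed.

Lemma entails_tensorE {G G' : list fm} {f g h : fm} :
  entails G (Tensor f g) -> entails (f :: g :: G') h -> entails (G ++ G') h.
Proof.
  intros H H'. apply (entails_app_of_eliminates (P := supp_ctx [f; g])).
  - intros B K HK. apply supp_tensor_iff, H, HK.
  - intros D K K' Hfg HG'. exact (H' D _ (supp_ctx_app (G := [f; g]) Hfg HG')).
Qed.

Lemma entails_oneI : entails [] (One A).
Proof. intros B K -> C M p _ Hd. exact Hd. Qed.

Lemma entails_oneE {G G' : list fm} {h : fm} :
  entails G (One A) -> entails G' h -> entails (G ++ G') h.
Proof.
  intros H H'. apply (entails_app_of_eliminates (P := fun _ K => K = [])).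
  - intros B K HK. apply supp_one_iff, H, HK.
  - intros D K K' -> HG'. exact (H' D K' HG').
Qed.

Lemma entails_withI {G : list fm} {f g : fm} : entails G f -> entails G g -> entails G (With f g).
Proof. intros H H' B K HK. exact (conj (H B K HK) (H' B K HK)). Qed.

Lemma entails_withE1 {G : list fm} {f g : fm} : entails G (With f g) -> entails G f.
Proof. intros H B K HK. exact (proj1 (H B K HK)). Qed.

Lemma entails_withE2 {G : list fm} {f g : fm} : entails G (With f g) -> entails G g.
Proof. intros H B K HK. exact (proj2 (H B K HK)). Qed.

Lemma entails_plusI1 {G : list fm} {f g : fm} : entails G f -> entails G (Plus f g).
Proof. intros H B K HK. exact (supp_plus_intro_l (H B K HK)). Qed.

Lemma entails_plusI2 {G : list fm} {f g : fm} : entails G g -> entails G (Plus f g).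
Proof. intros H B K HK. exact (supp_plus_intro_r (H B K HK)). Qed.

Lemma entails_plusE {G G' : list fm} {f g h : fm} :
  entails G (Plus f g) -> entails (f :: G') h -> entails (g :: G') h -> entails (G ++ G') h.
Proof.
  intros H Hf Hg.
  apply (entails_app_of_eliminates (P := fun D K => supp_ante f D K \/ supp_ante g D K)).
  - intros B K HK. apply supp_plus_iff, H, HK.
  - intros D K K' [HK | HK] HG'; [apply Hf | apply Hg];
      (exists K, K'; split; [reflexivity | auto]).
Qed.

Lemma entails_topI {G : list fm} : entails G (Top A).
Proof. intros B K _. exact I. Qed.

Lemma entails_zeroE {G G' : list fm} {h : fm} :
  entails G' (Zero A) -> entails (G ++ G') h.
Proof.
  intros H. apply (entails_perm (Permutation_app_comm G' G)).
  apply (entails_app_of_eliminates (P := fun _ _ => False)); [| contradiction].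
  intros B K HK. apply supp_zero_iff, H, HK.
Qed.

Lemma entails_prom {ps : list (list fm * fm)} {f : fm} :
  Forall (fun p => entails (fst p) (Bang (snd p))) ps ->
  entails (map (fun p => Bang (snd p)) ps) f ->
  entails (concat (map fst ps)) (Bang f).
Proof.
  intros Hps Hf B K HK. rewrite <- (app_nil_r K).
  apply (supp_of_entails_bangs Hps HK). intros D _ Hs.
  exact (supp_bang_intro (Hf D [] (supp_ctx_map_bang Hs))).
Qed.

Lemma entails_der {G G' : list fm} {f g : fm} :
  entails G (Bang f) -> entails (f :: G') g -> entails (G ++ G') g.
Proof.
  intros H H'. apply (entails_app_of_eliminates (P := supp_ante (Bang f))).
  - intros B K HK. exact (supp_eliminates (H B K HK)).
  - intros D K K' [-> Hf] HG'. exact (supp_of_entails_cons H' Hf HG').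
Qed.

Lemma entails_wk {G G' : list fm} {f g : fm} :
  entails G (Bang f) -> entails G' g -> entails (G ++ G') g.
Proof.
  intros H H'. apply (entails_app_of_eliminates (P := supp_ante (Bang f))).
  - intros B K HK. exact (supp_eliminates (H B K HK)).
  - intros D K K' [-> _] HG'. exact (H' D K' HG').
Qed.

Lemma entails_ctr {G G' : list fm} {f g : fm} :
  entails G (Bang f) -> entails (Bang f :: Bang f :: G') g -> entails (G ++ G') g.
Proof.
  intros H H'. apply (entails_app_of_eliminates (P := supp_ante (Bang f))).
  - intros B K HK. exact (supp_eliminates (H B K HK)).
  - intros D K K' [-> Hf] HG'. apply H'.
    exists [], K'. split; [reflexivity | split; [split; auto |]].
    exists [], K'. split; [reflexivity | split; [split; auto | exact HG']].
Qed.

Lemma entails_of_nd {G : list fm} {f : fm} : nd G f -> entails G f.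
Proof.
  revert G f. fix IH 3. intros G0 f0 d.
  destruct d as [G G' f HG d | f | G f g d | G G' f g d1 d2 | G G' f g d1 d2
    | G G' f g h d1 d2 | | G G' f d1 d2 | G f g d1 d2 | G f g d | G f g d
    | G f g d | G f g d | G G' f g h d1 d2 d3 | ps _ | ps G' h _ d | ps f Hps d
    | G G' f g d1 d2 | G G' f g d1 d2 | G G' f g d1 d2].
  - exact (entails_perm HG (IH _ _ d)).
  - exact entails_ax.
  - exact (entails_lolliI (IH _ _ d)).
  - exact (entails_lolliE (IH _ _ d1) (IH _ _ d2)).
  - exact (entails_tensorI (IH _ _ d1) (IH _ _ d2)).
  - exact (entails_tensorE (IH _ _ d1) (IH _ _ d2)).
  - exact entails_oneI.
  - exact (entails_oneE (IH _ _ d1) (IH _ _ d2)).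
  - exact (entails_withI (IH _ _ d1) (IH _ _ d2)).
  - exact (entails_withE1 (IH _ _ d)).
  - exact (entails_withE2 (IH _ _ d)).
  - exact (entails_plusI1 (IH _ _ d)).
  - exact (entails_plusI2 (IH _ _ d)).
  - exact (entails_plusE (IH _ _ d1) (IH _ _ d2) (IH _ _ d3)).
  - exact entails_topI.
  - exact (entails_zeroE (IH _ _ d)).
  - apply entails_prom; [| exact (IH _ _ d)].
    clear d. induction Hps as [|q ps Hq _ IHps]; constructor; [exact (IH _ _ Hq) | exact IHps].
  - exact (entails_der (IH _ _ d1) (IH _ _ d2)).
  - exact (entails_wk (IH _ _ d1) (IH _ _ d2)).
  - exact (entails_ctr (IH _ _ d1) (IH _ _ d2)).
Qed.

Lemma supp_ms_cons {t : fm} {Th : list fm} {B : bs} {K} :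
  supp_ms (t :: Th) B K ->
  exists K1 K2, Permutation K (K1 ++ K2) /\ supp t B K1 /\ supp_ms Th B K2.
Proof.
  destruct Th as [|t' Th]; intros H; [| exact H].
  exists K, []. rewrite app_nil_r. repeat split; [reflexivity | exact H].
Qed.

Lemma supp_ctx_of_supp_ms {G : list fm} {B : bs} {K} :
  (forall d, In (Bang d) G -> supp d B []) ->
  supp_ms (filter (fun g => negb (is_bang g)) G) B K -> supp_ctx G B K.
Proof.
  revert K. induction G as [|g G IH]; intros K Hb H; [exact H |].
  assert (Hb' : forall d, In (Bang d) G -> supp d B []) by (intros d Hd; apply Hb; now right).
  destruct g; cbn [filter negb is_bang] in H;
    try (destruct (supp_ms_cons H) as (K1 & K2 & HP & Hg & HG);
         exists K1, K2; split; [exact HP | split; [exact Hg | exact (IH _ Hb' HG)]]).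
  exists [], K. split; [reflexivity | split; [split; [reflexivity | apply Hb; now left] |]].
  exact (IH _ Hb' H).
Qed.

Lemma valid_of_entails {G : list fm} {f : fm} : entails G f -> valid G f.
Proof.
  intros H B. unfold seq_supp. destruct G as [|g G].
  - exact (H B [] eq_refl).
  - intros C _ K Hb HK. exact (H C K (supp_ctx_of_supp_ms Hb HK)).
Qed.

End Soundness.

Theorem theorem6 (A : Type) (G : list (formula A)) (f : formula A) :
  nd G f -> valid G f.
Proof.
  intros d. exact (valid_of_entails (entails_of_nd d)).
Qed.
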